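(* Let $T$ be a finite tree rooted at a vertex $v$ and let $M_0$ be a dominating set of $T$ such that (a) no parent of a supported vertex of $M_0$ lies in $M_0$, and (b) no supported vertex of $M_0$ is a descendant of another supported vertex of $M_0$. Then Algorithm 1 (described below), applied to $T$ rooted at $v$ and $M_0$, terminates and outputs a minimal dominating set $M_i$ with $|M_i|\ge |M_0|$ (for any choices made during the algorithm). Algorithm 1: set $i=0$; while $M_i$ is not a minimal dominating set: choose a supported vertex $u_i\in M_i\setminus a(M_i)$ of least depth; let $A_{i+1}$ be the set of vertices of $a_1(M_i)$ adjacent to $u_i$; let $N_{i+1}$ be the set of vertices of $N_1(M_i)$ adjacent to a vertex of $A_{i+1}$; set $M_{i+1}=(M_i\setminus A_{i+1})\cup N_{i+1}$ and increase $i$ by one. When the loop ends, return $M_i$.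
   Context: A dominating set of a graph $G=(V,E)$ is a set $S\subseteq V$ such that every vertex is in $S$ or adjacent to a vertex of $S$; it is minimal if no proper subset is dominating. $N[u]=N(u)\cup\{u\}$ is the closed neighbourhood. For a dominating set $S$: $a(S)=\{u\in S: S\setminus\{u\}\text{ is not dominating}\}$ (critical vertices); vertices of $S\setminus a(S)$ are called supported; $N_1(S)=\{u\in V\setminus S: |N[u]\cap S|=1\}$; $a_1(S)=\{u\in a(S): N[u]\cap N_1(S)\ne\emptyset\}$. In a tree rooted at $v$, depth is the distance to $v$; $x$ is a descendant of $y$ if $y$ lies on the path from $x$ to $v$; the parent of $x\neq v$ is its neighbour on that path. *)

From mathcomp Require Import all_boot.
From Stdlib Require Export Relations.Relation_Operators.
Set Implicit Arguments. Unset Strict Implicit. Unset Printing Implicit Defensive.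

Section Defs.
Variables (T : finType) (e : rel T).

Definition is_tree : Prop :=
  symmetric e /\ irreflexive e /\ (forall x y : T, connect e x y) /\
  (forall c : seq T, uniq c -> 2 < size c -> ~~ cycle e c).

Definition cnbhd (u : T) : {set T} := [set y | (y == u) || e u y].

Definition dominating (S : {set T}) : bool :=
  [forall x, cnbhd x :&: S != set0].

Definition minimal_dominating (S : {set T}) : Prop :=
  dominating S /\ forall S' : {set T}, S' \proper S -> ~~ dominating S'.

(* a(S): critical vertices *)
Definition crit (S : {set T}) : {set T} := [set u in S | ~~ dominating (S :\ u)].
Definition supported (S : {set T}) : {set T} := S :\: crit S.
Definition N1 (S : {set T}) : {set T} :=
  [set u in ~: S | #|cnbhd u :&: S| == 1].
Definition a1 (S : {set T}) : {set T} :=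
  [set u in crit S | cnbhd u :&: N1 S != set0].

Variable v : T.

Definition dist_le (x y : T) (n : nat) : Prop :=
  exists p : seq T, size p <= n /\ path e x p /\ last x p = y.

(* depth u <= depth w, i.e. dist(v,u) <= dist(v,w) *)
Definition depth_le (u w : T) : Prop :=
  forall n, dist_le v w n -> dist_le v u n.

(* y lies on the (unique simple) path from x to the root v *)
Definition descendant (x y : T) : Prop :=
  forall p : seq T, path e x p -> last x p = v -> uniq (x :: p) -> y \in x :: p.

Definition parent_of (x y : T) : Prop := x != v /\ e x y /\ descendant x y.

Definition alg_step (M M' : {set T}) : Prop :=
  ~ minimal_dominating M /\
  exists u : T,
    u \in supported M /\
    (forall w, w \in supported M -> depth_le u w) /\
    let A := [set x in a1 M | e u x] in
    let N := [set y in N1 M | [exists x in A, e y x]] in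
    M' = (M :\: A) :|: N.

End Defs.

From mathcomp Require Import all_boot zify.
From Stdlib Require Import Relations.Relation_Operators.

Set Implicit Arguments.
Unset Strict Implicit.
Unset Printing Implicit Defensive.

(* Call M admissible when it is dominating and satisfies (a) and (b).  One
   iteration of the loop on an admissible M, for any supported u, removes exactly the children of u lying in M and adds,
   for each of them, the children that it alone dominates.  Every removed
   vertex has such a private child, so |M| does not decrease.  The new set is
   admissible again: u and the added vertices become critical, and a vertex
   that becomes supported lies below u, has its parent outside the new set and
   an added grandparent.  Finally, the set of vertices lying below some
   supported vertex loses u and gains nothing, which bounds the number of
   iterations, and when no supported vertex is left M is minimal. *)

Section Domination.
Variables (T : finType) (e : rel T).
Hypothesis e_sym : symmetric e.

Lemma cnbhdE x y : (y \in cnbhd e x) = (y == x) || e x y.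
Proof. by rewrite inE. Qed.

Lemma cnbhd_refl x : x \in cnbhd e x.
Proof. by rewrite cnbhdE eqxx. Qed.

Lemma cnbhd_edge x y : e x y -> y \in cnbhd e x.
Proof. by rewrite cnbhdE => ->; rewrite orbT. Qed.

Lemma edge_of_cnbhd x y : y \in cnbhd e x -> y != x -> e x y.
Proof. by rewrite cnbhdE => /orP [/eqP ->|//]; rewrite eqxx. Qed.

Lemma cnbhdC x y : (y \in cnbhd e x) = (x \in cnbhd e y).
Proof. by rewrite !cnbhdE eq_sym e_sym. Qed.

Lemma cnbhdI_set1P (S : {set T}) q x y :
  cnbhd e q :&: S = [set x] -> y \in S -> y \in cnbhd e q -> y = x.
Proof. by move=> qx yS yq; apply/set1P; rewrite -qx inE yq yS. Qed.

Lemma cnbhdI_set1_mem (S : {set T}) q x : cnbhd e q :&: S = [set x] -> x \in S.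
Proof. by move=> qx; have := set11 x; rewrite -qx => /setIP []. Qed.

Lemma cnbhdI_set1_cnbhd (S : {set T}) q x : cnbhd e q :&: S = [set x] -> x \in cnbhd e q.
Proof. by move=> qx; have := set11 x; rewrite -qx => /setIP []. Qed.

Lemma dominatingP (S : {set T}) :
  reflect (forall x, exists2 y, y \in S & y \in cnbhd e x) (dominating e S).
Proof.
apply: (iffP forallP) => [dS x|dS x]; first by have /set0Pn [y /setIP [yx yS]] := dS x; exists y.
by have [y yS yx] := dS x; apply/set0Pn; exists y; rewrite inE yx.
Qed.

Lemma dominatingS (S S' : {set T}) : S \subset S' -> dominating e S -> dominating e S'.
Proof.
move=> /subsetP sub /dominatingP dS; apply/dominatingP => x.
by have [y /sub yS' yx] := dS x; exists y.
Qed.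

Lemma supportedE (S : {set T}) x : (x \in supported e S) = (x \in S) && dominating e (S :\ x).
Proof. by rewrite !inE; case: (x \in S); rewrite /= ?andbT ?negbK. Qed.

Lemma mem_supported (S : {set T}) x : x \in supported e S -> x \in S.
Proof. by rewrite supportedE => /andP []. Qed.

Lemma crit_mem (S : {set T}) x : x \in crit e S -> x \in S.
Proof. by rewrite inE => /andP []. Qed.

Lemma supported_notcrit (S : {set T}) x : x \in supported e S -> x \notin crit e S.
Proof. by rewrite inE => /andP []. Qed.

Lemma critW (S : {set T}) x q :
  x \in S -> (forall y, y \in S -> y \in cnbhd e q -> y = x) -> x \in crit e S.
Proof.
move=> xS qx; rewrite inE xS; apply/negP => /dominatingP /(_ q) [y].
by rewrite in_setD1 => /andP [yNx yS] /(qx _ yS) /eqP; rewrite (negPf yNx).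
Qed.

Lemma crit_private (S : {set T}) x :
  dominating e S -> x \in crit e S -> exists q, cnbhd e q :&: S = [set x].
Proof.
move=> /dominatingP dS; rewrite inE => /andP [xS /forallPn [q /negPn /eqP qS]].
have only_x y : y \in cnbhd e q -> y \in S -> y = x.
  move=> yq yS; apply/eqP/negPn/negP => yNx.
  have : y \in cnbhd e q :&: (S :\ x) by rewrite in_setI in_setD1 yq yNx yS.
  by rewrite qS inE.
exists q; apply/setP => y; rewrite in_setI in_set1.
apply/andP/eqP => [[yq yS]|->]; first exact: only_x.
by have [z zS zq] := dS q; rewrite -(only_x z zq zS).
Qed.

Lemma a1_crit (S : {set T}) x : x \in a1 e S -> x \in crit e S.
Proof. by rewrite /a1 inE => /andP []. Qed.

Lemma N1P (S : {set T}) q :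
  reflect (q \notin S /\ exists x, cnbhd e q :&: S = [set x]) (q \in N1 e S).
Proof. by rewrite inE in_setC; apply: (iffP andP) => -[qS q1]; split=> //; exact/cards1P. Qed.

Lemma minimal_dominatingP (S : {set T}) :
  dominating e S -> minimal_dominating e S <-> supported e S = set0.
Proof.
move=> dS; split=> [[_ minS]|supp0]; last split=> // S' /properP [/subsetP S'S [x xS xS']].
  apply/setP => x; rewrite supportedE inE; apply/andP => -[xS dSx].
  by have := minS _ (properD1 xS); rewrite dSx.
have S'_sub : S' \subset S :\ x.
  by apply/subsetP => y yS'; rewrite in_setD1 S'S // andbT; apply: contraNneq xS' => <-.
apply: contraT; rewrite negbK => /(dominatingS S'_sub) dSx.
by move/setP: supp0 => /(_ x); rewrite supportedE xS dSx inE.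
Qed.

End Domination.

Section RootedTree.
Variables (T : finType) (e : rel T) (v : T).
Hypotheses (e_sym : symmetric e) (e_irr : irreflexive e).
Hypothesis e_conn : forall x y : T, connect e x y.
Hypothesis e_acyclic : forall c : seq T, uniq c -> 2 < size c -> ~~ cycle e c.

Lemma edge_neq x y : e x y -> x != y.
Proof. by apply: contraTneq => ->; rewrite e_irr. Qed.

Definition walk_le (x : T) (n : nat) : bool :=
  [exists k : 'I_n.+1, [exists t : k.-tuple T, path e v t && (last v t == x)]].

Lemma walk_leP x n : reflect (dist_le e v x n) (walk_le x n).
Proof.
apply: (iffP existsP) => [[k /existsP [t /andP [pt /eqP <-]]]|[p [sz [pp <-]]]].
  by exists t; rewrite size_tuple -ltnS.
have lt_p : size p < n.+1 by [].
by exists (Ordinal lt_p); apply/existsP; exists (in_tuple p); rewrite pp eqxx.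
Qed.

Lemma short_walk x : exists2 n, n < #|T| & walk_le x n.
Proof.
have /connectP [p pp ->] := e_conn v x; case/shortenP: pp => q pq uq _.
exists (size q); last by apply/walk_leP; exists q.
by move/card_uniqP: uq => /= <-; apply: max_card.
Qed.

(* A bounded search, so that [depth] does not depend on the connectivity
   hypothesis; shortest walks have fewer than [#|T|] edges. *)
Definition depth (x : T) : nat := find (walk_le x) (iota 0 #|T|).

Lemma dist_le_depth x n : dist_le e v x n <-> depth x <= n.
Proof.
have [m lt_m wm] := short_walk x.
have has_w : has (walk_le x) (iota 0 #|T|) by apply/hasP; exists m; rewrite ?mem_iota.
have lt_d : depth x < #|T| by move: has_w; rewrite has_find size_iota.
have /walk_leP [p [sz_p walk_p]] : walk_le x (depth x).
  by have := nth_find 0 has_w; rewrite nth_iota.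
split=> [/walk_leP w_n|le_dn]; last by exists p; split=> //; apply: leq_trans le_dn.
rewrite leqNgt; apply/negP => lt_nd.
by have := before_find 0 lt_nd; rewrite nth_iota ?w_n // (ltn_trans lt_nd lt_d).
Qed.

Lemma depth_walk x : exists p, [/\ size p = depth x, path e v p & last v p = x].
Proof.
have /dist_le_depth [p [sz_p [pp lp]]] := leqnn (depth x).
suff eq_p : size p = depth x by exists p.
by apply/eqP; rewrite eqn_leq sz_p; apply/dist_le_depth; exists p.
Qed.

Lemma depth_root : depth v = 0.
Proof. by apply/eqP; rewrite -leqn0 -dist_le_depth; exists [::]. Qed.

Lemma depth_eq0 x : depth x = 0 -> x = v.
Proof. by have [[|y p] [/= <-]] := depth_walk x. Qed.

Lemma depth_edge x y : e x y -> depth y <= (depth x).+1.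
Proof.
move=> exy; have [p [sz_p pp lp]] := depth_walk x.
apply/dist_le_depth; exists (rcons p y).
by rewrite size_rcons sz_p rcons_path pp lp exy last_rcons.
Qed.

Lemma exists_parent x : x != v -> exists2 y, e x y & (depth y).+1 = depth x.
Proof.
move=> xv; have [p [sz_p pp lp]] := depth_walk x.
move: sz_p pp lp; case/lastP: p => [_ _ /= vx|p y]; first by rewrite vx eqxx in xv.
rewrite size_rcons rcons_path last_rcons => sz_p /andP [pp ey] yx; subst x.
exists (last v p); first by rewrite e_sym.
have : depth (last v p) <= size p by apply/dist_le_depth; exists p.
by have := depth_edge ey; lia.
Qed.

Definition parent (x : T) : T :=
  if x == v then v else odflt v [pick y | e x y && ((depth y).+1 == depth x)].

Lemma parent_root : parent v = v.
Proof. by rewrite /parent eqxx. Qed.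

Lemma parent_spec x : x != v -> e x (parent x) /\ (depth (parent x)).+1 = depth x.
Proof.
move=> xv; rewrite /parent (negPf xv); case: pickP => [y /andP [-> /eqP] //|none].
by have [y exy dy] := exists_parent xv; move: (none y); rewrite exy dy eqxx.
Qed.

Lemma parent_edge x : x != v -> e x (parent x).
Proof. by case/parent_spec. Qed.

Lemma depth_parent x : depth (parent x) = (depth x).-1.
Proof.
have [->|xv] := eqVneq x v; first by rewrite parent_root depth_root.
by case: (parent_spec xv) => _ <-.
Qed.

Lemma notin_shallow x s D : all (fun w => depth w <= D) s -> D < depth x -> x \notin s.
Proof. by move=> /allP s_le; apply: contraTN => /s_le; rewrite -leqNgt. Qed.

(* Climb from [y] and [z] in parallel until the two parents meet. *)
Lemma same_depth_path D y z : depth y = D -> depth z = D -> y != z ->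
  exists s, [/\ path e y s, last y s = z, uniq (y :: s),
                all (fun w => depth w <= D) (y :: s) & 1 < size s].
Proof.
elim: D y z => [|D IH] y z dy dz yz; first by rewrite (depth_eq0 dy) (depth_eq0 dz) eqxx in yz.
have yv : y != v by apply: contra_eqN dy => /eqP->; rewrite depth_root.
have zv : z != v by apply: contra_eqN dz => /eqP->; rewrite depth_root.
have [ey dpy] := parent_spec yv; have [ez dpz] := parent_spec zv.
have {}dpy : depth (parent y) = D by apply: succn_inj; rewrite dpy.
have {}dpz : depth (parent z) = D by apply: succn_inj; rewrite dpz.
have [pyz|pyz] := eqVneq (parent y) (parent z).
  exists [:: parent y; z]; split=> //=; first by rewrite ey pyz e_sym ez.
    by rewrite !inE !negb_or yz edge_neq // pyz eq_sym edge_neq.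
  by rewrite dy dz dpy leqnn leqnSn.
have [s [ps ls us s_le _]] := IH _ _ dpy dpz pyz.
exists (parent y :: rcons s z); split=> //.
- by rewrite /= ey rcons_path ps ls e_sym ez.
- by rewrite /= last_rcons.
- rewrite -rcons_cons cons_uniq rcons_uniq us mem_rcons in_cons negb_or yz.
  by rewrite !(notin_shallow s_le) // ?dy ?dz.
- rewrite -2!rcons_cons all_rcons -cat1s all_cat all_seq1 dy dz leqnn.
  by rewrite (sub_all _ s_le) // => w; apply: leqW.
- by rewrite /= size_rcons.
Qed.

Lemma depth_edge_neq x y : e x y -> depth x != depth y.
Proof.
move=> exy; apply/eqP => dxy.
have [s [ps ls us _ sz_s]] := same_depth_path dxy erefl (edge_neq exy).
have := e_acyclic us; rewrite /= ltnS sz_s => /(_ isT); apply/negP.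
by rewrite /= rcons_path ps ls e_sym exy.
Qed.

Lemma parent_unique x y : e x y -> (depth y).+1 = depth x -> y = parent x.
Proof.
move=> exy dyx; have xv : x != v by apply: contra_eqN dyx => /eqP->; rewrite depth_root.
have [exp dpx] := parent_spec xv; have dp : depth (parent x) = depth y by lia.
apply/eqP; apply: contraT => /(same_depth_path erefl dp) [s [ps ls us s_le sz_s]].
have xs : x \notin y :: s by apply: (notin_shallow s_le); lia.
have := e_acyclic (c := x :: y :: s); rewrite cons_uniq xs us /= !ltnS ltnW //.
by move=> /(_ isT isT) /negP[]; rewrite /= exy rcons_path ps ls e_sym exp.
Qed.

Lemma tree_edge x y : e x y -> y = parent x \/ x = parent y.
Proof.
move=> exy; have le_yx := depth_edge exy; have le_xy := depth_edge (y := x) (x := y).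
rewrite e_sym exy in le_xy; have := depth_edge_neq exy.
case: (ltngtP (depth x) (depth y)) => // [lt_xy|lt_yx] _.
  by right; apply: parent_unique; rewrite 1?e_sym //; lia.
by left; apply: parent_unique => //; lia.
Qed.

(* [below x y]: [x] lies in the subtree rooted at [y]. *)
Definition below (x y : T) : bool := y \in traject parent x (depth x).+1.

Lemma depth_iter_parent k x : depth (iter k parent x) = depth x - k.
Proof. by elim: k => [|k IH]; rewrite ?subn0 // iterS depth_parent IH subnS. Qed.

Lemma iter_parent_root k x : depth x <= k -> iter k parent x = v.
Proof. by move=> le_xk; apply: depth_eq0; rewrite depth_iter_parent; lia. Qed.

Lemma belowP x y : reflect (exists k, iter k parent x = y) (below x y).
Proof.
apply: (iffP trajectP) => [[k _ ->]|[k <-]]; first by exists k.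
have [le_kx|lt_xk] := leqP k (depth x); first by exists k.
by exists (depth x); rewrite // !iter_parent_root // ltnW.
Qed.

Lemma below_refl x : below x x.
Proof. by apply/belowP; exists 0. Qed.

Lemma below_parent x : below x (parent x).
Proof. by apply/belowP; exists 1. Qed.

Lemma below_trans x y z : below x y -> below y z -> below x z.
Proof. by move=> /belowP [i <-] /belowP [j <-]; apply/belowP; exists (j + i); rewrite iterD. Qed.

Lemma below_parentW x y : below x y -> x != y -> below (parent x) y.
Proof.
by move=> /belowP [[|k] <-]; rewrite ?eqxx // => _; apply/belowP; exists k; rewrite iterSr.
Qed.

Lemma below_antisym x y : below x y -> below y x -> x = y.
Proof.
move=> /belowP [[|i] yx] /belowP [j xy]; first by rewrite -yx.
have := congr1 depth xy; rewrite -yx -iterD depth_iter_parent => dx.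
have /depth_eq0 xv : depth x = 0 by lia.
by rewrite xv iter_parent_root // depth_root.
Qed.

Definition strictly_below (x y : T) : bool := below x y && (x != y).

Lemma strictly_below_cnbhd x y z :
  strictly_below x z -> y \in cnbhd e x -> strictly_below y z \/ y = z.
Proof.
move=> xz; rewrite cnbhdE => /orP [/eqP -> //|exy]; first by left.
move: xz => /andP [xz xNz]; case: (tree_edge exy) => [yx|xy].
  have := below_parentW xz xNz; rewrite -yx => yz.
  by have [|yNz] := eqVneq y z; [right | left; rewrite /strictly_below yz].
have yx : below y x by rewrite xy below_parent.
left; rewrite /strictly_below (below_trans yx xz); apply: contraNneq xNz => yz.
by move: xz; rewrite xy yz => pzz; rewrite (below_antisym pzz (below_parent z)).
Qed.

Lemma path_from_child q x y :
  parent y = x -> path e y q -> uniq (x :: y :: q) -> last y q != v.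
Proof.
elim: q x y => [|z q IH] x y /= yx.
  by move=> _; apply: contraTneq => yv; rewrite -yx yv parent_root inE eqxx.
move=> /andP [eyz pq] /and3P [xNyq yNq uq]; case: (tree_edge eyz) => [zy|yz].
  by move: xNyq; rewrite -yx -zy !inE eqxx orbT.
by apply: (IH y) => //=; rewrite yNq uq.
Qed.

Lemma ancestors_on_path_to_root q x :
  path e x q -> uniq (x :: q) -> last x q = v -> forall k, iter k parent x \in x :: q.
Proof.
elim: q x => [|y q IH] x /=; first by move=> _ _ -> k; rewrite iter_parent_root ?depth_root ?inE.
move=> /andP [exy pq] /andP [xNq uq] lq [|k]; first by rewrite inE eqxx.
case: (tree_edge exy) => [yx|xy].
  by rewrite iterSr -yx in_cons IH ?orbT.
by have := path_from_child (esym xy) pq; rewrite /= xNq uq lq eqxx => /(_ isT).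
Qed.

Lemma depth_le_leq x y : depth x <= depth y -> depth_le e v x y.
Proof. by move=> le_xy n /dist_le_depth le_yn; apply/dist_le_depth; apply: leq_trans le_yn. Qed.

Lemma below_descendant x y : below x y -> descendant e v x y.
Proof. by move=> /belowP [k <-] p pp lp up; apply: ancestors_on_path_to_root. Qed.

Definition admissible (M : {set T}) : Prop :=
  [/\ dominating e M,
      forall w, w \in supported e M -> w != v -> parent w \notin M &
      forall w1 w2, w1 \in supported e M -> w2 \in supported e M -> w1 != w2 ->
        ~~ below w1 w2].

Definition supported_subtrees (M : {set T}) : {set T} :=
  [set x | [exists w in supported e M, below x w]].

Definition removed (M : {set T}) (u : T) : {set T} := [set x in a1 e M | e u x].

Definition added (M : {set T}) (u : T) : {set T} :=
  [set y in N1 e M | [exists x in removed M u, e y x]].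

Definition update (M : {set T}) (u : T) : {set T} := M :\: removed M u :|: added M u.

Section Update.
Variables (M : {set T}) (u : T).
Hypothesis M_dom : dominating e M.
Hypothesis M_parent : forall w, w \in supported e M -> w != v -> parent w \notin M.
Hypothesis M_incomparable : forall w1 w2,
  w1 \in supported e M -> w2 \in supported e M -> w1 != w2 -> ~~ below w1 w2.
Hypothesis u_supp : u \in supported e M.

Local Notation A := (removed M u).
Local Notation N := (added M u).
Local Notation M' := (update M u).

Lemma u_in : u \in M.
Proof. exact: mem_supported u_supp. Qed.

Lemma removed_sub x : x \in A -> x \in M.
Proof. by move=> /setIdP [/a1_crit /crit_mem xM _]. Qed.

Lemma u_notin_removed : u \notin A.
Proof. by apply: contra (supported_notcrit u_supp) => /setIdP [/a1_crit uc _]. Qed.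

Lemma child_of_u x : x \in M -> e u x -> parent x = u.
Proof.
move=> xM eux; case: (tree_edge eux) => [xu|//].
have uv : u != v by apply: contraTneq eux => uv; rewrite xu uv parent_root e_irr.
by move: (M_parent u_supp uv); rewrite -xu xM.
Qed.

Lemma removedE x : (x \in A) = (x \in M) && e u x.
Proof.
apply/idP/andP => [xA|[xM eux]]; first by split; [exact: removed_sub | case/setIdP: xA].
have x_crit : x \in crit e M.
  apply: contraT => xNc; have xS : x \in supported e M by rewrite inE xNc xM.
  have xNu : x != u by rewrite eq_sym edge_neq.
  by move: (M_incomparable xS u_supp xNu); rewrite -(child_of_u xM eux) below_parent.
have [q qx] := crit_private M_dom x_crit.
have qM : q \notin M.
  apply: contra (edge_neq eux) => qM; have qx' := cnbhdI_set1P qx qM (cnbhd_refl _ q).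
  by rewrite (cnbhdI_set1P qx u_in) // qx' (cnbhdC e_sym) (cnbhd_edge eux).
rewrite inE eux andbT /a1 inE x_crit; apply/set0Pn; exists q.
by rewrite in_setI (cnbhdC e_sym) (cnbhdI_set1_cnbhd qx); apply/N1P; split=> //; exists x.
Qed.

Lemma parent_removed x : x \in A -> parent x = u.
Proof. by rewrite removedE => /andP [xM eux]; apply: child_of_u. Qed.

Lemma removed_nbr x y : x \notin M -> y \in A -> e x y -> y = parent x.
Proof.
move=> xM yA exy; case: (tree_edge exy) => // xy.
by move: xM; rewrite xy (parent_removed yA) u_in.
Qed.

Lemma addedP y :
  reflect [/\ y \notin M, parent y \in A & cnbhd e y :&: M = [set parent y]] (y \in N).
Proof.
apply: (iffP setIdP) => [[/N1P [yM [z yz]] /existsP [x /andP [xA eyx]]]|[yM pyA ypy]].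
  have xz := cnbhdI_set1P yz (removed_sub xA) (cnbhd_edge eyx).
  by rewrite -(removed_nbr yM xA eyx) yz xz; split=> //; rewrite -xz.
split; first by apply/N1P; split=> //; exists (parent y).
apply/existsP; exists (parent y); rewrite pyA /=.
apply: edge_of_cnbhd (cnbhdI_set1_cnbhd ypy) _.
by apply: contraNneq yM => pyy; rewrite -pyy removed_sub.
Qed.

Lemma updateE z : (z \in M') = (z \in M) && (z \notin A) || (z \in N).
Proof. by rewrite in_setU in_setD andbC. Qed.

Lemma removed_notin_update x : x \in A -> x \notin M'.
Proof.
move=> xA; rewrite updateE xA andbF /=.
by apply: contraL (removed_sub xA) => /addedP [].
Qed.

Lemma added_strictly_below y : y \in N -> strictly_below y u.
Proof.
move=> /addedP [yM /parent_removed ppy _]; apply/andP; split.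
  by apply/belowP; exists 2.
by apply: contraNneq yM => ->; apply: u_in.
Qed.

Lemma dominating_update : dominating e M'.
Proof.
apply/dominatingP => x.
have [/existsP [z /andP [zMA zx]]|noMA] := boolP [exists z in M :\: A, z \in cnbhd e x].
  by exists z; rewrite // in_setU zMA.
have domA z : z \in M -> z \in cnbhd e x -> z \in A.
  by move=> zM zx; apply: contraNT noMA => zA; apply/existsP; exists z; rewrite in_setD zA zM.
have [xM|xNM] := boolP (x \in M).
  exists u; first by rewrite updateE u_in u_notin_removed.
  by move: (domA x xM (cnbhd_refl _ x)); rewrite removedE (cnbhdC e_sym) => /andP [_ /cnbhd_edge].
have dom_parent z : z \in M -> z \in cnbhd e x -> z = parent x.
  move=> zM zx; apply: (removed_nbr xNM (domA z zM zx)).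
  by apply: (edge_of_cnbhd zx); apply: contraNneq xNM => <-.
have /dominatingP/(_ x) [y yM yx] := M_dom.
exists x; last exact: cnbhd_refl _ x.
rewrite updateE (negPf xNM) /=; apply/addedP; split=> //.
  by rewrite -(dom_parent y yM yx) domA.
apply/setP => z; rewrite in_setI in_set1; apply/andP/eqP => [[zx zM]|->].
  exact: dom_parent.
by rewrite -(dom_parent y yM yx).
Qed.

Lemma u_crit_update : u \in crit e M'.
Proof.
apply: (critW (q := u)); first by rewrite updateE u_in u_notin_removed.
move=> y yM' uy; apply/eqP; apply: contraT => yNu.
have euy : e u y by apply: (edge_of_cnbhd uy).
case: (tree_edge euy) => [yu|uy'].
  have uv : u != v by apply: contraTneq euy => uv; rewrite yu uv parent_root e_irr.
  move: yM'; rewrite updateE => /orP [/andP [yM _]|/added_strictly_below /andP [yBu _]].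
    by move: (M_parent u_supp uv); rewrite -yu yM.
  move: yBu; rewrite yu => /(below_antisym (below_parent u)) uu.
  by move: euy; rewrite yu -uu e_irr.
move: yM'; rewrite updateE removedE => /orP [/andP [yM]|/addedP [_]].
  by rewrite yM euy.
by rewrite -uy' (negPf u_notin_removed).
Qed.

Lemma added_crit_update y : y \in N -> y \in crit e M'.
Proof.
move=> yN; have /addedP [yM pyA ypy] := yN.
apply: (critW (q := y)); first by rewrite updateE yN orbT.
move=> z; rewrite updateE => /orP [/andP [zM zA] zy|zN zy].
  by move: zA; rewrite (cnbhdI_set1P ypy zM zy) pyA.
apply/eqP; apply: contraT => zNy; have /addedP [zM pzA _] := zN.
case: (tree_edge (edge_of_cnbhd zy zNy)) => [zpy|ypz].
  by move: zM; rewrite zpy removed_sub.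
by move: yM; rewrite ypz removed_sub.
Qed.

Lemma supported_update_outside w :
  w \in supported e M' -> ~~ strictly_below w u -> w \in supported e M /\ w != u.
Proof.
move=> wS wNu; move: (wS); rewrite supportedE => /andP [wM' /dominatingP dw].
have wN : w \notin N by apply: contra wNu; apply: added_strictly_below.
have wM : w \in M by move: wM'; rewrite updateE (negPf wN) orbF => /andP [].
have wu : w != u by apply: contraTneq (supported_notcrit wS) => ->; rewrite u_crit_update.
split=> //; rewrite supportedE wM /=; apply/dominatingP => x.
have [z] := dw x; rewrite in_setD1 => /andP [zw zM'] zx.
move: zM'; rewrite updateE => /orP [/andP [zM _]|zN].
  by exists z; rewrite // in_setD1 zw zM.
have [xu|->] : strictly_below x u \/ x = u.
  by apply: (strictly_below_cnbhd (added_strictly_below zN)); rewrite (cnbhdC e_sym).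
  have /dominatingP/(_ x) [m mM mx] := M_dom.
  exists m => //; rewrite in_setD1 mM andbT; apply: contra wNu => /eqP mw.
  by case: (strictly_below_cnbhd xu mx); rewrite mw // => wu'; rewrite wu' eqxx in wu.
by exists u; [rewrite in_setD1 u_in eq_sym wu | apply: cnbhd_refl].
Qed.

(* If [w] keeps its membership and stays supported, its private neighbour [q]
   must have been rescued by an added vertex, which can only be [parent q]. *)
Lemma private_nbr_update w q :
  w \in supported e M' -> w \notin A -> cnbhd e q :&: M = [set w] ->
  [/\ q = parent w, q \notin M' & parent q \in N].
Proof.
move=> wS wA qw; have wM := cnbhdI_set1_mem qw; have wq := cnbhdI_set1_cnbhd qw.
move: wS; rewrite supportedE => /andP [_ /dominatingP /(_ q) [r]].
rewrite in_setD1 => /andP [rw rM'] rq.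
have rM : r \notin M by apply: contra rw => rM; rewrite (cnbhdI_set1P qw rM rq).
have rN : r \in N by move: rM'; rewrite updateE (negPf rM).
have /addedP [_ prA rpr] := rN.
have wr : w \notin cnbhd e r by apply: contra wA => wr; rewrite (cnbhdI_set1P rpr wM wr).
have eqr : e q r by apply: (edge_of_cnbhd rq); apply: contraNneq wr => ->.
have eqw : e q w by apply: (edge_of_cnbhd wq); apply: contraNneq wr => ->; rewrite (cnbhdC e_sym).
have qM : q \notin M.
  by apply: contraTN eqw => qM; rewrite (cnbhdI_set1P qw qM (cnbhd_refl _ q)) e_irr.
have rpq : r = parent q.
  by case: (tree_edge eqr) => // qpr; move: qM; rewrite qpr removed_sub.
have qpw : q = parent w.
  by case: (tree_edge eqw) => // wpq; move: rw; rewrite rpq -wpq eqxx.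
split=> //; last by rewrite -rpq.
rewrite updateE (negPf qM) /=; apply: contra rM => /addedP [_ pqA _].
by rewrite rpq removed_sub.
Qed.

Lemma supported_update_inside w :
  w \in supported e M' -> strictly_below w u ->
  [/\ parent w \notin M', parent (parent w) \in N & w != v].
Proof.
move=> wS /andP [wBu wNu].
have wN : w \notin N := contra (@added_crit_update w) (supported_notcrit wS).
have /andP [wM wA] : (w \in M) && (w \notin A).
  by move: (mem_supported wS); rewrite updateE (negPf wN) orbF.
have w_crit : w \in crit e M.
  apply: contraT => wc; have wS0 : w \in supported e M by rewrite inE wc wM.
  by move: (M_incomparable wS0 u_supp wNu); rewrite wBu.
have [q qw] := crit_private M_dom w_crit.
have [qpw qM' pqN] := private_nbr_update wS wA qw.
split; rewrite -?qpw //; apply: contraNneq qM' => wv.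
by rewrite qpw wv parent_root -wv (mem_supported wS).
Qed.

Lemma supported_update_not_above w : w \in supported e M' -> ~~ below u w.
Proof.
move=> wS; have [/andP [wBu wNu]|wNu] := boolP (strictly_below w u).
  by apply: contra wNu => uBw; rewrite (below_antisym uBw wBu).
have [wS0 wNu'] := supported_update_outside wS wNu.
by apply: M_incomparable; rewrite // eq_sym.
Qed.

Lemma parent_supported_update w :
  w \in supported e M' -> w != v -> parent w \notin M'.
Proof.
move=> wS wv; have [wu|wNu] := boolP (strictly_below w u).
  by case: (supported_update_inside wS wu).
have [wS0 wNu'] := supported_update_outside wS wNu.
rewrite updateE (negPf (M_parent wS0 wv)) /=.
apply: contra wNu => /added_strictly_below /andP [pwBu _].
by rewrite /strictly_below (below_trans (below_parent w) pwBu) wNu'.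
Qed.

Lemma incomparable_update w1 w2 :
  w1 \in supported e M' -> w2 \in supported e M' -> w1 != w2 -> ~~ below w1 w2.
Proof.
move=> S1 S2 w12; apply/negP => B12.
have [w1u|w1Nu] := boolP (strictly_below w1 u).
  have [p1M' p2N _] := supported_update_inside S1 w1u.
  have /addedP [_ p3A _] := p2N.
  have w2M' := mem_supported S2.
  apply: (negP (supported_update_not_above S2)); rewrite -(parent_removed p3A).
  apply: below_parentW; last by apply: contraNneq (removed_notin_update p3A) => ->.
  apply: below_parentW; last first.
    by apply: contraTneq (added_crit_update p2N) => ->; apply: supported_notcrit.
  apply: below_parentW; last by apply: contraNneq p1M' => ->.
  exact: below_parentW B12 w12.
have [S1' w1Nu'] := supported_update_outside S1 w1Nu.
have [/andP [B2u _]|w2Nu] := boolP (strictly_below w2 u).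
  by move: w1Nu; rewrite /strictly_below (below_trans B12 B2u) w1Nu'.
have [S2' _] := supported_update_outside S2 w2Nu.
by move: (M_incomparable S1' S2' w12); rewrite B12.
Qed.

Lemma supported_subtrees_update : supported_subtrees M' \proper supported_subtrees M.
Proof.
apply/properP; split.
  apply/subsetP => x; rewrite !inE => /existsP [w /andP [wS xBw]]; apply/existsP.
  have [/andP [wBu _]|wNu] := boolP (strictly_below w u).
    by exists u; rewrite u_supp (below_trans xBw wBu).
  by have [wS0 _] := supported_update_outside wS wNu; exists w; rewrite wS0.
exists u; first by rewrite inE; apply/existsP; exists u; rewrite u_supp below_refl.
rewrite inE; apply/existsPn => w; apply/negP => /andP [wS uBw].
by move: (supported_update_not_above wS); rewrite uBw.
Qed.

(* Each removed vertex has a private neighbour outside [M]; it is one of its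
   children, and it is added. *)
Lemma removed_sub_parent_added : A \subset parent @: N.
Proof.
apply/subsetP => a aA; have /setIdP [/setIdP [_ /set0Pn [z /setIP [za zN1]]] _] := aA.
have /N1P [zM _] := zN1.
have eaz : e a z by apply: (edge_of_cnbhd za); apply: contraNneq zM => ->; apply: removed_sub.
have zN : z \in N by apply/setIdP; split=> //; apply/existsP; exists a; rewrite aA e_sym.
have /addedP [_ _ zpz] := zN.
by apply/imsetP; exists z; rewrite // (cnbhdI_set1P zpz (removed_sub aA)) // (cnbhdC e_sym).
Qed.

Lemma card_update : #|M| <= #|M'|.
Proof.
have MA_N : (M :\: A) :&: N = set0.
  by apply/setP => y; rewrite inE in_set0; apply/andP => -[/setDP [yM _] /addedP [/negP]].
rewrite cardsU MA_N cards0 subn0 -(cardsID A M) addnC leq_add2l.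
apply: leq_trans (leq_imset_card parent N).
apply: leq_trans (subset_leq_card removed_sub_parent_added).
by rewrite subset_leq_card // subsetIr.
Qed.

End Update.

Lemma admissible_update M u :
  admissible M -> u \in supported e M -> admissible (update M u).
Proof.
move=> [dM aM bM] uS; split.
- exact: dominating_update.
- exact: parent_supported_update.
- exact: incomparable_update.
Qed.

Lemma alg_stepP M M' : alg_step e v M M' -> exists2 u, u \in supported e M & M' = update M u.
Proof. by move=> [_ [u [uS [_ ->]]]]; exists u. Qed.

Lemma admissible_acc M : admissible M -> Acc (fun M' M => alg_step e v M M') M.
Proof.
have [n lt_Mn] := ubnP #|supported_subtrees M|.
elim: n M lt_Mn => [|n IH] M; first by rewrite ltn0.
move=> lt_Mn admM; constructor=> _ /alg_stepP [u uS ->]; have [dM aM bM] := admM.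
apply: IH; last exact: admissible_update.
exact: leq_trans (proper_card (supported_subtrees_update dM aM bM uS)) lt_Mn.
Qed.

Lemma admissible_reach M M' : clos_refl_trans _ (alg_step e v) M M' ->
  admissible M -> admissible M' /\ #|M| <= #|M'|.
Proof.
elim=> [M1 _ /alg_stepP [u uS ->] admM1|//|M1 M2 M3 _ IH12 _ IH23 admM1].
  by split; [exact: admissible_update | case: admM1 => *; exact: card_update].
have [admM2 le12] := IH12 admM1; have [admM3 le23] := IH23 admM2.
by split=> //; apply: leq_trans le12 le23.
Qed.

Lemma admissible_stuck_minimal M :
  admissible M -> (forall M', ~ alg_step e v M M') -> minimal_dominating e M.
Proof.
move=> [dM aM bM] stuck; apply/(minimal_dominatingP dM)/eqP/set0Pn => -[x xS].
have [u uS u_min] := arg_minnP depth xS.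
apply: (stuck (update M u)); split.
  by move=> /(minimal_dominatingP dM) supp0; rewrite supp0 inE in xS.
exists u; split=> //; split=> // w wS; apply: depth_le_leq; exact: u_min.
Qed.

End RootedTree.

Theorem theorem4p4 (T : finType) (e : rel T) (v : T) (M0 : {set T}) :
  is_tree e ->
  dominating e M0 ->
  (* (a) no parent of a supported vertex of M0 lies in M0 *)
  (forall u y, u \in supported e M0 -> parent_of e v u y -> y \notin M0) ->
  (* (b) no supported vertex is a descendant of another supported vertex *)
  (forall u w, u \in supported e M0 -> w \in supported e M0 -> u != w ->
     ~ descendant e v u w) ->
  (* termination: no infinite run of the loop, whatever the choices *)
  Acc (fun M' M => alg_step e v M M') M0 /\
  (* when the loop stops (no step possible), M_i is minimal dominating and
     at least as large as M0 *)
  (forall M : {set T}, clos_refl_trans _ (alg_step e v) M0 M ->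
     (forall M', ~ alg_step e v M M') ->
     minimal_dominating e M /\ #|M0| <= #|M|).
Proof.
move=> [e_sym [e_irr [e_conn e_acyclic]]] dM0 parent_M0 incomparable_M0.
have admM0 : admissible e v M0.
  split=> // [w wS wv|w1 w2 w1S w2S w12].
    apply: (parent_M0 w _ wS); split=> //; split; first exact: parent_edge.
    exact/below_descendant/below_parent.
  by apply/negP => B12; apply: (incomparable_M0 w1 w2) => //; exact: below_descendant.
split; first exact: admissible_acc.
move=> M reach stuck.
have [admM le_M0M] : admissible e v M /\ #|M0| <= #|M| by apply: admissible_reach.
by split=> //; exact: (admissible_stuck_minimal e_conn admM stuck).
Qed.
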